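(* Let $\mathcal{M}_R$ be a rule that assigns a probability $\mathcal{M}_R(r;F)\in[0,1]$ to each root $r$ of every forest $F\in\mathcal{F}^N$. Then there is at most one incentive-compatible selection mechanism $\mathcal{M}$ such that $\mathcal{M}(r;F)=\mathcal{M}_R(r;F)$ for every forest $F$ and every root $r$ of $F$.
   Context: Let $N$ be a finite set of vertices. A directed forest on $N$ is a directed acyclic graph on $N$ with every out-degree at most $1$; $\mathcal{F}^N$ is the set of such forests; roots are vertices with no out-edge. A selection mechanism is a function $\mathcal{M}:N\times\mathcal{F}^N\to[0,1]$ with $\sum_x\mathcal{M}(x;F)\le1$ for all $F$. It is incentive-compatible if $\mathcal{M}(x;F)=\mathcal{M}(x;F')$ whenever $F,F'$ differ only in the out-edge of $x$. *)

From mathcomp Require Import all_boot all_order all_algebra.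
Set Implicit Arguments. Unset Strict Implicit. Unset Printing Implicit Defensive.
Import Order.TTheory GRing.Theory Num.Theory.

(* A graph on the finite vertex set N with every out-degree at most 1 is
   encoded by its out-edge function: F x = Some y iff x -> y is an edge,
   F x = None iff x has no out-edge. *)
Definition graph (N : finType) := {ffun N -> option N}.

Fixpoint follow (N : finType) (F : graph N) (k : nat) (x : N) : option N :=
  match k with
  | 0 => Some x
  | k'.+1 => obind F (follow F k' x)
  end.

Definition is_forest (N : finType) (F : graph N) : Prop :=
  forall (x : N) (k : nat), (0 < k)%N -> follow F k x <> Some x.

Definition is_root (N : finType) (F : graph N) (r : N) : Prop := F r = None.

Local Open Scope ring_scope.

Definition selection_mechanism (R : realFieldType) (N : finType)
    (M : N -> graph N -> R) : Prop :=
  forall F : graph N, is_forest F ->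
    (forall x, 0 <= M x F <= 1) /\ \sum_(x : N) M x F <= 1.

Definition differ_only_at (N : finType) (x : N) (F F' : graph N) : Prop :=
  forall y, y != x -> F y = F' y.

Definition incentive_compatible (R : realFieldType) (N : finType)
    (M : N -> graph N -> R) : Prop :=
  forall (x : N) (F F' : graph N), is_forest F -> is_forest F' ->
    differ_only_at x F F' -> M x F = M x F'.

(* Deleting the out-edge of x keeps F a forest, turns x into a root and
   changes nothing but the out-edge of x.  Incentive compatibility therefore
   forces M(x; F) to equal M(x; F - x), which is the prescribed root
   probability M_R(x; F - x); so all such mechanisms agree everywhere. *)
From mathcomp Require Import all_boot all_order all_algebra.
Import Order.TTheory GRing.Theory Num.Theory.
Set Implicit Arguments. Unset Strict Implicit.
Local Open Scope ring_scope.

Section CutOutEdge.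

Variable N : finType.
Implicit Types (F : graph N) (x : N).

Definition cut_out_edge F x : graph N :=
  [ffun y => if y == x then None else F y].

Lemma follow_cut_out_edge F x k z w :
  follow (cut_out_edge F x) k z = Some w -> follow F k z = Some w.
Proof.
elim: k w => [|k IHk] w //=.
case Ek: (follow (cut_out_edge F x) k z) => [u|] //=.
by rewrite (IHk u Ek) /= ffunE; case: (u == x).
Qed.

Lemma forest_cut_out_edge F x : is_forest F -> is_forest (cut_out_edge F x).
Proof. by move=> forestF z k k_gt0 /follow_cut_out_edge; apply: forestF. Qed.

Lemma root_cut_out_edge F x : is_root (cut_out_edge F x) x.
Proof. by rewrite /is_root ffunE eqxx. Qed.

Lemma differ_only_at_cut_out_edge F x : differ_only_at x F (cut_out_edge F x).
Proof. by move=> y /negbTE y_neq_x; rewrite ffunE y_neq_x. Qed.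

Lemma incentive_compatible_cut_out_edge (R : realFieldType)
    (M : N -> graph N -> R) F x :
  incentive_compatible M -> is_forest F -> M x F = M x (cut_out_edge F x).
Proof.
move=> icM forestF; apply: icM => //.
  exact: forest_cut_out_edge.
exact: differ_only_at_cut_out_edge.
Qed.

End CutOutEdge.

Theorem corollary1 (R : realFieldType) (N : finType)
    (MR : N -> graph N -> R)
    (hMR : forall (F : graph N) (r : N), is_forest F -> is_root F r ->
             0 <= MR r F <= 1)
    (M1 M2 : N -> graph N -> R) :
  selection_mechanism M1 -> incentive_compatible M1 ->
  (forall (F : graph N) (r : N), is_forest F -> is_root F r -> M1 r F = MR r F) ->
  selection_mechanism M2 -> incentive_compatible M2 ->
  (forall (F : graph N) (r : N), is_forest F -> is_root F r -> M2 r F = MR r F) ->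
  forall (x : N) (F : graph N), is_forest F -> M1 x F = M2 x F.
Proof.
move=> _ icM1 M1_roots _ icM2 M2_roots x F forestF.
have forestFx : is_forest (cut_out_edge F x) by exact: forest_cut_out_edge.
have rootx := root_cut_out_edge F x.
rewrite (incentive_compatible_cut_out_edge x icM1 forestF).
rewrite (incentive_compatible_cut_out_edge x icM2 forestF).
by rewrite M1_roots // M2_roots.
Qed.
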